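(* Suppose Assumption 1 holds. Let $x\in\operatorname{dom}\psi$, let $H$ be a symmetric matrix with $\lambda_{\min}(H)=\sigma>0$, and let $d$ satisfy the $\eta$-inexactness condition for $Q^x_H$ for some $\eta\in[0,1)$. Then, with $\Delta \coloneqq \nabla f(x)^Td + \psi(x+d)-\psi(x)$, $$\Delta \le -\frac{1}{1+\sqrt\eta}\, d^THd \le -\frac{\sigma}{1+\sqrt\eta}\|d\|^2.$$ Moreover, for any $\beta,\gamma\in(0,1)$ the backtracking procedure that returns $\alpha=\beta^i$ for the smallest nonnegative integer $i$ with $F(x+\alpha d)\le F(x)+\alpha\gamma\Delta$ terminates after finitely many steps and $$\alpha\ge \bar\alpha\coloneqq \min\left\{1,\ \frac{2\beta(1-\gamma)\sigma}{L(1+\sqrt\eta)}\right\}.$$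
   Context: Problem setting: $F(x)=f(x)+\psi(x)$ on $\mathbb{R}^n$. Assumption 1: $f:\mathbb{R}^n\to\mathbb{R}$ is differentiable with $L$-Lipschitz continuous gradient for some $L>0$; $\psi:\mathbb{R}^n\to\mathbb{R}\cup\{+\infty\}$ is convex, proper and closed; $F$ is bounded below; and the solution set $\Omega=\{x: F(x)=F^*\}$, $F^*=\inf F$, is nonempty. For $x\in\mathbb{R}^n$ and a symmetric matrix $H$, $Q^x_H(d) \coloneqq \nabla f(x)^T d + \frac12 d^T H d + \psi(x+d) - \psi(x)$ (so $Q^x_H(0)=0$) and $Q^*\coloneqq\inf_d Q^x_H(d)$. A vector $d$ satisfies the $\eta$-inexactness condition (for $Q=Q^x_H$) if $Q(d)-Q^*\le \eta(Q(0)-Q^* )$, equivalently $Q(d)\le(1-\eta)Q^*$. $\lambda_{\min}(H)$ denotes the smallest eigenvalue of $H$. *)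

From mathcomp Require Import all_boot.
From Stdlib Require Import Reals.
Set Implicit Arguments.
Unset Strict Implicit.
Open Scope R_scope.

Definition vec (n : nat) := 'I_n -> R.
Definition mat (n : nat) := 'I_n -> 'I_n -> R.

Definition vsum (n : nat) (g : 'I_n -> R) : R := \big[Rplus/R0]_(i : 'I_n) g i.
Definition dot (n : nat) (u v : vec n) : R := vsum (fun i => u i * v i).
Definition vnorm (n : nat) (v : vec n) : R := sqrt (dot v v).
Definition vadd (n : nat) (u v : vec n) : vec n := fun i => u i + v i.
Definition vsub (n : nat) (u v : vec n) : vec n := fun i => u i - v i.
Definition vscale (n : nat) (a : R) (v : vec n) : vec n := fun i => a * v i.
Definition mulmv (n : nat) (H : mat n) (v : vec n) : vec n :=
  fun i => vsum (fun j => H i j * v j).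

Definition sym_mat (n : nat) (H : mat n) : Prop := forall i j, H i j = H j i.
Definition is_eigenvalue (n : nat) (H : mat n) (lam : R) : Prop :=
  exists v : vec n, (exists i, v i <> 0) /\ forall i, mulmv H v i = lam * v i.
Definition lambda_min_is (n : nat) (H : mat n) (s : R) : Prop :=
  is_eigenvalue H s /\ forall lam, is_eigenvalue H lam -> s <= lam.

Definition is_gradient (n : nat) (f : vec n -> R) (g : vec n -> vec n) : Prop :=
  forall x eps, 0 < eps -> exists delta, 0 < delta /\
    forall h, vnorm h < delta ->
      Rabs (f (vadd x h) - f x - dot (g x) h) <= eps * vnorm h.
Definition lipschitz_map (n : nat) (g : vec n -> vec n) (L : R) : Prop :=
  forall x y, vnorm (vsub (g x) (g y)) <= L * vnorm (vsub x y).

(* extended reals R u {+oo}: Some r = r, None = +oo *)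
Definition ext_le (a b : option R) : Prop :=
  match b with
  | None => True
  | Some b' => match a with Some a' => a' <= b' | None => False end
  end.
Definition in_dom (n : nat) (psi : vec n -> option R) (x : vec n) : Prop :=
  exists a, psi x = Some a.

Definition ext_convex (n : nat) (psi : vec n -> option R) : Prop :=
  forall x y a b t, psi x = Some a -> psi y = Some b -> 0 <= t <= 1 ->
    ext_le (psi (vadd (vscale t x) (vscale (1 - t) y))) (Some (t * a + (1 - t) * b)).
Definition ext_proper (n : nat) (psi : vec n -> option R) : Prop :=
  exists x, in_dom psi x.
(* closed: the epigraph {(x,t) | psi x <= t} is closed *)
Definition vec_cv (n : nat) (xs : nat -> vec n) (x : vec n) : Prop :=
  Un_cv (fun k => vnorm (vsub (xs k) x)) 0.
Definition ext_closed (n : nat) (psi : vec n -> option R) : Prop :=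
  forall (xs : nat -> vec n) (ts : nat -> R) x t,
    (forall k, ext_le (psi (xs k)) (Some (ts k))) ->
    vec_cv xs x -> Un_cv ts t -> ext_le (psi x) (Some t).

Definition Fext (n : nat) (f : vec n -> R) (psi : vec n -> option R) (x : vec n)
  : option R := option_map (fun p => f x + p) (psi x).

Definition assumption1 (n : nat) (f : vec n -> R) (gradf : vec n -> vec n) (L : R)
    (psi : vec n -> option R) : Prop :=
  is_gradient f gradf /\ 0 < L /\ lipschitz_map gradf L /\
  ext_convex psi /\ ext_proper psi /\ ext_closed psi /\
  (exists m, forall x a, Fext f psi x = Some a -> m <= a) /\
  (exists xs a, Fext f psi xs = Some a /\ forall y b, Fext f psi y = Some b -> a <= b).

Definition Qmodel (n : nat) (gradf : vec n -> vec n) (psi : vec n -> option R)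
    (x : vec n) (px : R) (H : mat n) (d : vec n) : option R :=
  option_map (fun p => dot (gradf x) d + / 2 * dot d (mulmv H d) + p - px)
             (psi (vadd x d)).

Definition is_glb (S : R -> Prop) (m : R) : Prop :=
  (forall s, S s -> m <= s) /\ (forall m', (forall s, S s -> m' <= s) -> m' <= m).

(* eta-inexactness: Q(d) - Qstar <= eta (Q(0) - Qstar), Q(0) = 0, Qstar = inf Q *)
Definition eta_inexact (n : nat) (Q : vec n -> option R) (eta : R) (d : vec n) : Prop :=
  exists Qstar qd, is_glb (fun q => exists d', Q d' = Some q) Qstar /\
    Q d = Some qd /\ qd - Qstar <= eta * (0 - Qstar).

From mathcomp Require Import all_boot all_algebra.
From mathcomp Require Import Rstruct.
From Stdlib Require Import Reals Lra Lia Wf_nat FunctionalExtensionality Classical.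
Import GRing.Theory Num.Theory.
Open Scope R_scope.
Set Implicit Arguments.
Unset Strict Implicit.

(* Convexity of psi gives Q(td) <= t Delta + t^2 d^T H d / 2 for t in [0, 1], so Q* lies
   below the minimum of this parabola over [0, 1]; with Q(d) = Delta + d^T H d / 2 <= (1 - eta) Q*
   this yields (1 + sqrt eta) Delta <= - d^T H d, while d^T H d >= sigma |d|^2 because the infimum
   of the Rayleigh quotient of a symmetric matrix is an eigenvalue. The descent lemma and convexity
   give F(x + a d) <= F(x) + a Delta + L a^2 |d|^2 / 2, so the Armijo test passes as soon as
   a <= 2 (1 - gamma) sigma / (L (1 + sqrt eta)), and the first accepted beta^i is at least
   beta times this threshold. *)

Lemma Rlt_div_mul (a b c : R) : 0 < c -> a < b / c -> a * c < b.
Proof.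
move=> c_gt0 /(Rmult_lt_compat_r c _ _ c_gt0).
by rewrite /Rdiv Rmult_assoc Rinv_l; lra.
Qed.

Lemma Rle_div_mul (a b c : R) : 0 < c -> a <= b / c -> a * c <= b.
Proof.
move=> c_gt0 /(Rmult_le_compat_r c _ _ (Rlt_le _ _ c_gt0)).
by rewrite /Rdiv Rmult_assoc Rinv_l; lra.
Qed.

Lemma nonneg_quadratic_discr (A B C : R) :
  0 <= C -> (forall t, 0 <= A + 2 * t * B + t * t * C) -> B * B <= A * C.
Proof.
move=> C_ge0 q_ge0; case: (Rle_lt_or_eq_dec 0 C C_ge0) => [C_gt0 | C0].
- have := q_ge0 (- B / C).
  have -> : A + 2 * (- B / C) * B + (- B / C) * (- B / C) * C = (A * C - B * B) / C
    by field; lra.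
  move=> /(Rmult_le_compat_r C _ _ C_ge0); rewrite Rmult_0_l.
  have -> : (A * C - B * B) / C * C = A * C - B * B by field; lra.
  lra.
- subst C; case: (Req_dec B 0) => [-> | B0]; first lra.
  have := q_ge0 (- (A + 1) / (2 * B)).
  have -> : A + 2 * (- (A + 1) / (2 * B)) * B = -1 by field.
  lra.
Qed.

Lemma eq_vsum n (u v : 'I_n -> R) : (forall i, u i = v i) -> vsum u = vsum v.
Proof. by move=> uv; apply: eq_bigr => i _; rewrite uv. Qed.

Lemma vsum_comb n (a b : R) (u v : 'I_n -> R) :
  vsum (fun i => a * u i + b * v i) = a * vsum u + b * vsum v.
Proof. by rewrite /vsum big_split /= -!mulr_sumr. Qed.

Lemma vsumZ n (a : R) (u : 'I_n -> R) : vsum (fun i => a * u i) = a * vsum u.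
Proof. by rewrite /vsum -mulr_sumr. Qed.

Lemma ler_vsum n (u v : 'I_n -> R) : (forall i, u i <= v i) -> vsum u <= vsum v.
Proof. by move=> uv; apply/RleP/ler_sum => i _; apply/RleP. Qed.

Lemma vsum_ge_term n (u : 'I_n -> R) k : (forall i, 0 <= u i) -> u k <= vsum u.
Proof.
move=> u_ge0; apply/RleP; rewrite /vsum (bigD1 k) //= lerDl.
by apply: sumr_ge0 => i _; apply/RleP.
Qed.

Lemma exchange_vsum n (F : 'I_n -> 'I_n -> R) :
  vsum (fun i => vsum (F i)) = vsum (fun j => vsum (F^~ j)).
Proof. exact: exchange_big. Qed.

Lemma vsum_delta n (w : vec n) i : vsum (fun j => if i == j then w j else 0) = w i.
Proof.
rewrite /vsum (bigD1 i) //= eqxx big1 ?Rplus_0_r // => j ji.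
by rewrite eq_sym (negbTE ji).
Qed.

Lemma dotC n (u v : vec n) : dot u v = dot v u.
Proof. by apply: eq_vsum => i; rewrite Rmult_comm. Qed.

Lemma dot_combl n (a b : R) (u v w : vec n) :
  dot (fun i => a * u i + b * v i) w = a * dot u w + b * dot v w.
Proof. rewrite /dot -vsum_comb; apply: eq_vsum => i; ring. Qed.

Lemma dot_combr n (a b : R) (u v w : vec n) :
  dot w (fun i => a * u i + b * v i) = a * dot w u + b * dot w v.
Proof. by rewrite dotC dot_combl !(dotC w). Qed.

Lemma dot_subl n (u v w : vec n) : dot (vsub u v) w = dot u w - dot v w.
Proof.
transitivity (dot (fun i => 1 * u i + (-1) * v i) w); last by rewrite dot_combl; ring.
by apply: eq_vsum => i; rewrite /vsub; ring.
Qed.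

Lemma dotZl n c (u v : vec n) : dot (vscale c u) v = c * dot u v.
Proof. rewrite /dot -vsumZ; apply: eq_vsum => i; rewrite /vscale; ring. Qed.

Lemma dotZr n c (u v : vec n) : dot v (vscale c u) = c * dot v u.
Proof. by rewrite dotC dotZl dotC. Qed.

Lemma mulmv_comb n (M : mat n) (a b : R) (u v : vec n) :
  mulmv M (fun i => a * u i + b * v i) = fun i => a * mulmv M u i + b * mulmv M v i.
Proof.
apply: functional_extensionality => i; rewrite /mulmv -vsum_comb.
apply: eq_vsum => j; ring.
Qed.

Lemma mulmvZ n (M : mat n) c (u : vec n) : mulmv M (vscale c u) = vscale c (mulmv M u).
Proof.
apply: functional_extensionality => i; rewrite /mulmv /vscale -vsumZ.
apply: eq_vsum => j; ring.
Qed.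

Lemma dot_mulmvC n (M : mat n) (u v : vec n) :
  sym_mat M -> dot u (mulmv M v) = dot (mulmv M u) v.
Proof.
move=> M_sym; rewrite /dot /mulmv.
transitivity (vsum (fun i => vsum (fun j => u i * M i j * v j))).
  by apply: eq_vsum => i; rewrite -vsumZ; apply: eq_vsum => j; ring.
rewrite exchange_vsum; apply: eq_vsum => j; rewrite Rmult_comm -vsumZ.
by apply: eq_vsum => i; rewrite M_sym; ring.
Qed.

Lemma dotvv_ge0 n (v : vec n) : 0 <= dot v v.
Proof.
apply: Rle_trans (ler_vsum (v := fun i => v i * v i) (fun i => Rle_0_sqr (v i))).
by right; symmetry; apply: big1.
Qed.

Lemma dotvv_eq0 n (u v : vec n) : dot u u = 0 -> dot u v = 0.
Proof.
move=> uu0; have u0 i : u i = 0.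
  have := vsum_ge_term i (fun j => Rle_0_sqr (u j)).
  by rewrite /Rsqr -/(dot u u) uu0; nra.
rewrite /dot -(Rmult_0_l (vsum v)) -vsumZ.
by apply: eq_vsum => i; rewrite u0.
Qed.

Lemma vnorm_sqr n (v : vec n) : vnorm v * vnorm v = dot v v.
Proof. exact/sqrt_sqrt/dotvv_ge0. Qed.

Lemma vnormZ n (s : R) (v : vec n) : vnorm (vscale s v) = Rabs s * vnorm v.
Proof.
rewrite /vnorm dotZl dotZr -Rmult_assoc sqrt_mult ?sqrt_Rsqr_abs //.
  exact: Rle_0_sqr.
exact: dotvv_ge0.
Qed.

Lemma psd_Cauchy_Schwarz n (M : mat n) (u v : vec n) : sym_mat M ->
  (forall w, 0 <= dot w (mulmv M w)) ->
  dot u (mulmv M v) * dot u (mulmv M v) <= dot u (mulmv M u) * dot v (mulmv M v).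
Proof.
move=> M_sym M_psd; apply: nonneg_quadratic_discr => [|t]; first exact: M_psd.
have := M_psd (fun i => 1 * u i + t * v i).
rewrite mulmv_comb dot_combl !dot_combr (dot_mulmvC v) // (dotC _ u).
lra.
Qed.

Lemma Cauchy_Schwarz n (u v : vec n) : dot u v * dot u v <= dot u u * dot v v.
Proof.
apply: nonneg_quadratic_discr => [|t]; first exact: dotvv_ge0.
have := dotvv_ge0 (fun i => 1 * u i + t * v i).
rewrite dot_combl !dot_combr (dotC v u); lra.
Qed.

Lemma dot_le_vnorm n (u v : vec n) : dot u v <= vnorm u * vnorm v.
Proof.
have := Cauchy_Schwarz u v; rewrite -!vnorm_sqr => CS.
have := sqrt_pos (dot u u); have := sqrt_pos (dot v v); rewrite -/(vnorm u) -/(vnorm v).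
move=> nv nu; apply: Rnot_lt_le => lt_uv.
have nuv := Rmult_le_pos _ _ nu nv.
have := Rmult_le_0_lt_compat _ _ _ _ nuv nuv lt_uv lt_uv; lra.
Qed.

Definition injective_mat n (M : mat n) : Prop :=
  forall v : vec n, (forall i, mulmv M v i = 0) -> forall i, v i = 0.

Section LeftInverse.
Local Open Scope ring_scope.

Lemma mulmv_left_inverse n (M : mat n) :
  injective_mat M -> exists N : mat n, forall v i, mulmv N (mulmv M v) i = v i.
Proof.
move=> M_inj.
pose A : 'M[R]_n := \matrix_(i, j) M j i.
have rowA (v : vec n) i : ((\row_j v j) *m A) 0 i = mulmv M v i.
  by rewrite mxE; apply: eq_bigr => j _; rewrite !mxE mulrC.
have A_unit : A \in unitmx.
  rewrite unitmxE unitfE; apply/det0P => -[r /eqP r_neq0 rA0]; apply: r_neq0.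
  have r_row : r = \row_k r 0 k by apply/rowP => k; rewrite mxE.
  apply/rowP => j; rewrite mxE r_row mxE; apply: M_inj => i.
  by rewrite -rowA -r_row rA0 mxE.
exists (fun i k => invmx A k i) => v i.
have := congr1 (fun m : 'rV_n => m 0 i) (mulmxK A_unit (\row_j v j)).
rewrite /= mxE => <-; rewrite mxE.
by apply: eq_bigr => k _; rewrite rowA mulrC.
Qed.

End LeftInverse.

Lemma mulmv_sqr_bound n (M : mat n) :
  exists K, 0 <= K /\ forall w, dot (mulmv M w) (mulmv M w) <= K * dot w w.
Proof.
exists (vsum (fun i => dot (M i) (M i))); split.
  by apply: Rle_trans (ler_vsum (fun i => dotvv_ge0 (M i))); right; symmetry; apply: big1.
move=> w; rewrite [X in _ <= X]Rmult_comm -vsumZ; apply: ler_vsum => i.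
rewrite [X in _ <= X]Rmult_comm; exact: Cauchy_Schwarz.
Qed.

Lemma quad_form_bound n (M : mat n) :
  exists C, 0 < C /\ forall w, Rabs (dot w (mulmv M w)) <= C * dot w w.
Proof.
have [K [K_ge0 MK]] := mulmv_sqr_bound M; exists (K + 1); split; first lra.
move=> w; have := Cauchy_Schwarz w (mulmv M w); have := MK w.
have := dotvv_ge0 w; have := dotvv_ge0 (mulmv M w).
set q := dot w (mulmv M w); set a := dot w w; set b := dot (mulmv M w) (mulmv M w).
move=> b_ge0 a_ge0 bK qab.
have qKa : Rabs q * Rabs q <= K * a * a by rewrite -Rabs_mult Rabs_right; nra.
apply: Rnot_lt_le => lt_q; have Ka_ge0 : 0 <= (K + 1) * a by nra.
have := Rmult_le_0_lt_compat _ _ _ _ Ka_ge0 Ka_ge0 lt_q lt_q; nra.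
Qed.

(* With [N] a left inverse of [M]: [|w|^2 <= K_N |Mw|^2], and
   [|Mw|^4 <= (w^T M w) (Mw)^T M (Mw) <= C (w^T M w) |Mw|^2]. *)
Lemma psd_injective_coercive n (M : mat n) : sym_mat M ->
  (forall w, 0 <= dot w (mulmv M w)) -> injective_mat M ->
  exists c, 0 < c /\ forall w, c * dot w w <= dot w (mulmv M w).
Proof.
move=> M_sym M_psd M_inj.
have [N NM] := mulmv_left_inverse M_inj.
have [KN [KN_ge0 NK]] := mulmv_sqr_bound N.
have [C [C_gt0 MC]] := quad_form_bound M.
exists (/ (KN * C + 1)); split; first by apply: Rinv_0_lt_compat; nra.
move=> w; set q := dot w (mulmv M w); set p := dot (mulmv M w) (mulmv M w).
have w_le_p : dot w w <= KN * p.
  have NMw : mulmv N (mulmv M w) = w by apply: functional_extensionality => i; apply: NM.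
  by have := NK (mulmv M w); rewrite NMw.
have p_le_q : p <= q * C.
  have := psd_Cauchy_Schwarz w (mulmv M w) M_sym M_psd.
  rewrite (dot_mulmvC w) // -/p -/q => pq.
  have MMw : dot (mulmv M w) (mulmv M (mulmv M w)) <= C * p.
    by have := MC (mulmv M w); rewrite Rabs_right //; apply/Rle_ge/M_psd.
  have := M_psd w; rewrite -/q => q_ge0.
  have ppq : p * p <= q * C * p by have := Rmult_le_compat_l q _ _ q_ge0 MMw; lra.
  have p_ge0 : 0 <= p := dotvv_ge0 _.
  case: (Rle_lt_or_eq_dec _ _ p_ge0) => [p_gt0 | p0].
    by apply: (Rmult_le_reg_r p); [exact: p_gt0 | lra].
  by rewrite -p0; nra.
have := M_psd w; have := dotvv_ge0 w; rewrite -/q => w_ge0 q_ge0.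
apply: (Rmult_le_reg_l (KN * C + 1)); first nra.
rewrite -Rmult_assoc Rinv_r; nra.
Qed.

Lemma rescale_unit n (M : mat n) (w : vec n) : 0 < dot w w ->
  exists u, dot u u = 1 /\ dot w (mulmv M w) = dot w w * dot u (mulmv M u).
Proof.
move=> w_gt0; have nw_gt0 : 0 < vnorm w by apply: sqrt_lt_R0.
exists (vscale (/ vnorm w) w).
rewrite mulmvZ !dotZl !dotZr -vnorm_sqr; split; field; lra.
Qed.

Lemma rayleigh_inf n (M : mat n) (d : vec n) : 0 < dot d d ->
  exists m, (forall w, m * dot w w <= dot w (mulmv M w)) /\
    forall e, 0 < e -> exists w, dot w w = 1 /\ dot w (mulmv M w) < m + e.
Proof.
move=> d_gt0; have [C [C_gt0 MC]] := quad_form_bound M.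
pose T r := exists w : vec n, dot w w = 1 /\ r = - dot w (mulmv M w).
have T_bound : bound T.
  exists C => _ [w [w1 ->]]; have := MC w; rewrite w1.
  have := Rle_abs (- dot w (mulmv M w)); rewrite Rabs_Ropp; lra.
have T_ne : exists r, T r.
  have [u [u1 _]] := rescale_unit M d_gt0; by exists (- dot u (mulmv M u)), u.
have [s [s_ub s_lub]] := completeness T T_bound T_ne.
exists (- s); split.
- move=> w; case: (Rle_lt_or_eq_dec _ _ (dotvv_ge0 w)) => [w_gt0 | w0].
    have [u [u1 ->]] := rescale_unit M w_gt0.
    have := s_ub _ (ex_intro _ u (conj u1 erefl)); nra.
  by rewrite (dotvv_eq0 (mulmv M w) (esym w0)) -w0; lra.
- move=> e e_gt0; apply: NNPP => no_w.
  suff : s <= s - e by lra.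
  apply: s_lub => _ [w [w1 ->]].
  have : ~ dot w (mulmv M w) < - s + e by move=> lt_w; apply: no_w; exists w.
  lra.
Qed.

Definition shiftmx n (M : mat n) (m : R) : mat n :=
  fun i j => M i j - (if i == j then m else 0).

Lemma mulmv_shiftmx n (M : mat n) m (w : vec n) :
  mulmv (shiftmx M m) w = fun i => 1 * mulmv M w i + (- m) * w i.
Proof.
apply: functional_extensionality => i; rewrite -(vsum_delta w i) -vsum_comb.
by apply: eq_vsum => j; rewrite /shiftmx; case: (i == j); ring.
Qed.

(* [M - m I] is psd with infimum [0] on the unit sphere, so it cannot be injective. *)
Lemma rayleigh_inf_eigenvalue n (M : mat n) (m : R) : sym_mat M ->
  (forall w, m * dot w w <= dot w (mulmv M w)) ->
  (forall e, 0 < e -> exists w, dot w w = 1 /\ dot w (mulmv M w) < m + e) ->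
  is_eigenvalue M m.
Proof.
move=> M_sym m_lb m_inf.
have quad_shift w : dot w (mulmv (shiftmx M m) w) = dot w (mulmv M w) - m * dot w w.
  by rewrite mulmv_shiftmx dot_combr; ring.
have shift_sym : sym_mat (shiftmx M m) by move=> i j; rewrite /shiftmx M_sym eq_sym.
have shift_psd w : 0 <= dot w (mulmv (shiftmx M m) w) by rewrite quad_shift; have := m_lb w; lra.
case: (classic (injective_mat (shiftmx M m))) => [shift_inj | not_inj].
  have [c [c_gt0 c_lb]] := psd_injective_coercive shift_sym shift_psd shift_inj.
  have [w [w1 wm]] := m_inf c c_gt0.
  by have := c_lb w; rewrite quad_shift w1; lra.
apply: NNPP => no_eig; apply: not_inj => v v_ker i; apply: NNPP => vi0.
apply: no_eig; exists v; split; first by exists i.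
by move=> j; have := v_ker j; rewrite mulmv_shiftmx; lra.
Qed.

Lemma lambda_min_le_quad n (H : mat n) (sigma : R) (d : vec n) :
  sym_mat H -> lambda_min_is H sigma -> sigma * dot d d <= dot d (mulmv H d).
Proof.
move=> H_sym [_ sigma_min].
case: (Rle_lt_or_eq_dec _ _ (dotvv_ge0 d)) => [d_gt0 | d0].
  have [m [m_lb m_inf]] := rayleigh_inf H d_gt0.
  have := sigma_min m (rayleigh_inf_eigenvalue H_sym m_lb m_inf).
  by have := m_lb d; nra.
by rewrite (dotvv_eq0 (mulmv H d) (esym d0)) -d0; lra.
Qed.

Lemma line_derivative n (f : vec n -> R) (g : vec n -> vec n) (x d : vec n) s :
  is_gradient f g ->
  derivable_pt_lim (fun t => f (vadd x (vscale t d))) s (dot (g (vadd x (vscale s d))) d).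
Proof.
move=> f_grad eps eps_gt0.
set y := vadd x (vscale s d); set nd := vnorm d.
have nd_ge0 : 0 <= nd := sqrt_pos (dot d d).
have nd1_gt0 : 0 < nd + 1 by lra.
set eps' := eps / (nd + 1); have eps'_gt0 : 0 < eps' := Rdiv_lt_0_compat _ _ eps_gt0 nd1_gt0.
have eps'E : eps' * (nd + 1) = eps by rewrite /eps'; field; lra.
have [del [del_gt0 f_lin]] := f_grad y eps' eps'_gt0.
exists (mkposreal _ (Rdiv_lt_0_compat _ _ del_gt0 nd1_gt0)) => h h_neq0 /= h_lt.
have -> : vadd x (vscale (s + h) d) = vadd y (vscale h d).
  by apply: functional_extensionality => i; rewrite /y /vadd /vscale; ring.
have h_gt0 : 0 < Rabs h := Rabs_pos_lt h h_neq0.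
have hd_lt : vnorm (vscale h d) < del.
  by rewrite vnormZ -/nd; have := Rlt_div_mul nd1_gt0 h_lt; lra.
have := f_lin _ hd_lt; rewrite dotZr vnormZ -/nd.
set D := f (vadd y (vscale h d)) - f y; set G := dot (g y) d => lin_err.
have -> : D / h - G = (D - h * G) / h by field.
rewrite /Rdiv Rabs_mult Rabs_inv; apply: (Rmult_lt_reg_r (Rabs h)) => //.
rewrite Rmult_assoc Rinv_l; last lra.
rewrite -eps'E; nra.
Qed.

Lemma lipschitz_directional n (g : vec n -> vec n) (L : R) (x d : vec n) s :
  lipschitz_map g L -> 0 <= s ->
  dot (g (vadd x (vscale s d))) d - dot (g x) d <= L * s * dot d d.
Proof.
move=> g_lip s_ge0; set y := vadd x (vscale s d).
rewrite -dot_subl.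
have := g_lip y x.
have -> : vsub y x = vscale s d.
  by apply: functional_extensionality => i; rewrite /y /vsub /vadd /vscale; ring.
rewrite vnormZ Rabs_right; last exact: Rle_ge.
move=> lip.
have := dot_le_vnorm (vsub (g y) (g x)) d.
have := sqrt_pos (dot (vsub (g y) (g x)) (vsub (g y) (g x))); rewrite -/(vnorm _).
have := sqrt_pos (dot d d); rewrite -/(vnorm d) -vnorm_sqr.
nra.
Qed.

(* Mean value theorem for [s |-> f (x + s d) - s g(x)^T d - L/2 s^2 |d|^2], whose derivative
   is [<= 0] on [s >= 0]. *)
Lemma descent_lemma n (f : vec n -> R) (g : vec n -> vec n) (L : R) (x d : vec n) t :
  is_gradient f g -> lipschitz_map g L -> 0 <= t ->
  f (vadd x (vscale t d)) <= f x + t * dot (g x) d + L / 2 * (t * t) * dot d d.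
Proof.
move=> f_grad g_lip t_ge0.
have x0 : vadd x (vscale 0 d) = x.
  by apply: functional_extensionality => i; rewrite /vadd /vscale; ring.
case: (Rle_lt_or_eq_dec _ _ t_ge0) => [t_gt0 | <-]; last by rewrite x0; lra.
set G0 := dot (g x) d; set c := L / 2 * dot d d.
pose phi s := f (vadd x (vscale s d)).
pose q s := s * G0 + c * (s * s).
pose h := (phi - q)%F.
have h_der s : derivable_pt_lim h s
    (dot (g (vadd x (vscale s d))) d - (1 * G0 + c * (1 * s + s * 1))).
  apply: derivable_pt_lim_minus; first exact: line_derivative.
  apply: (derivable_pt_lim_plus (fun s => s * G0) (mult_real_fct c (id * id)%F)).
    exact/derivable_pt_lim_scal_right/derivable_pt_lim_id.
  by apply/derivable_pt_lim_scal/derivable_pt_lim_mult; apply: derivable_pt_lim_id.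
pose h_derivable : derivable h := fun s => exist _ _ (h_der s).
have [s [h_mvt [s_gt0 _]]] := MVT_cor1 h 0 t h_derivable t_gt0.
have h'_le0 : derive_pt h s (h_derivable s) <= 0.
  rewrite /derive_pt /= /c.
  have := lipschitz_directional x d g_lip (Rlt_le _ _ s_gt0); rewrite -/G0; lra.
have : h t <= h 0 by have := Rmult_le_compat_r t _ _ (Rlt_le _ _ t_gt0) h'_le0; lra.
rewrite /h /phi /q /minus_fct x0 /c.
lra.
Qed.

Lemma ext_convex_segment n (psi : vec n -> option R) (x d : vec n) px pd t :
  ext_convex psi -> psi x = Some px -> psi (vadd x d) = Some pd -> 0 <= t <= 1 ->
  exists p, psi (vadd x (vscale t d)) = Some p /\ p <= t * pd + (1 - t) * px.
Proof.
move=> psi_cvx psi_x psi_xd t01; have := psi_cvx _ _ _ _ t psi_xd psi_x t01.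
have -> : vadd (vscale t (vadd x d)) (vscale (1 - t) x) = vadd x (vscale t d).
  by apply: functional_extensionality => i; rewrite /vadd /vscale; ring.
by case: (psi (vadd x (vscale t d))) => [p|] //= p_le; exists p.
Qed.

Lemma Qmodel_segment n (gradf : vec n -> vec n) (psi : vec n -> option R) (H : mat n)
    (x d : vec n) px pd t :
  ext_convex psi -> psi x = Some px -> psi (vadd x d) = Some pd -> 0 <= t <= 1 ->
  exists q, Qmodel gradf psi x px H (vscale t d) = Some q /\
    q <= t * (dot (gradf x) d + pd - px) + t * t * dot d (mulmv H d) / 2.
Proof.
move=> psi_cvx psi_x psi_xd t01.
have [p [psi_xtd p_le]] := ext_convex_segment psi_cvx psi_x psi_xd t01.
eexists; rewrite /Qmodel psi_xtd; split; first reflexivity.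
rewrite mulmvZ dotZl !dotZr; lra.
Qed.

(* Evaluate the parabola at its minimizer [t = -D/a], which lies in [0, 1] unless [D <= -a];
   the resulting bound factors as [((1 - sqrt eta) D + a) ((1 + sqrt eta) D + a) <= 0]. *)
Lemma inexact_step_bound (eta a D Qstar : R) :
  0 <= eta < 1 -> 0 <= a ->
  (forall t, 0 <= t <= 1 -> Qstar <= t * D + t * t * a / 2) ->
  D + a / 2 <= (1 - eta) * Qstar ->
  D * (1 + sqrt eta) <= - a.
Proof.
move=> eta01 a_ge0 Qstar_le inexact.
set r := sqrt eta; have r_ge0 : 0 <= r := sqrt_pos eta.
have rr : r * r = eta by apply: sqrt_sqrt; lra.
have r_lt1 : r < 1 by nra.
have D_le : D <= - a / 2 by have := Qstar_le 0; nra.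
case: (Rle_or_lt D (- a)) => [D_le_a | a_lt_D]; first nra.
have a_gt0 : 0 < a by lra.
have t01 : 0 <= - D / a <= 1.
  split; first by apply: Rmult_le_pos; [lra | left; apply: Rinv_0_lt_compat].
  by apply: (Rmult_le_reg_r a) => //; rewrite /Rdiv Rmult_assoc Rinv_l; lra.
have Qstar_min : Qstar * (2 * a) <= - (D * D).
  have -> : - (D * D) = (- D / a * D + - D / a * (- D / a) * a / 2) * (2 * a) by field; lra.
  by apply: Rmult_le_compat_r; [lra | exact: Qstar_le].
have disc : (1 - r * r) * (D * D) + 2 * a * D + a * a <= 0.
  rewrite rr; have := Rmult_le_compat_r (2 * a) _ _ ltac:(lra) inexact.
  have := Rmult_le_compat_l (1 - eta) _ _ ltac:(lra) Qstar_min; nra.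
have factor_pos : 0 < (1 - r) * D + a by nra.
apply: Rnot_lt_le => lt_D.
have := Rmult_lt_0_compat ((1 - r) * D + a) ((1 + r) * D + a) factor_pos ltac:(lra).
nra.
Qed.

Lemma ext_le_weaken (a : option R) (b c : R) : ext_le a (Some b) -> b <= c -> ext_le a (Some c).
Proof. by case: a => [a|] //= ab bc; lra. Qed.

Lemma Fext_descent n (f : vec n -> R) (g : vec n -> vec n) (L : R) (psi : vec n -> option R)
    (x d : vec n) px pd t :
  is_gradient f g -> lipschitz_map g L -> ext_convex psi ->
  psi x = Some px -> psi (vadd x d) = Some pd -> 0 <= t <= 1 ->
  ext_le (Fext f psi (vadd x (vscale t d)))
    (Some (f x + px + t * (dot (g x) d + pd - px) + L / 2 * (t * t) * dot d d)).
Proof.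
move=> f_grad g_lip psi_cvx psi_x psi_xd t01.
have [p [psi_xtd p_le]] := ext_convex_segment psi_cvx psi_x psi_xd t01.
rewrite /Fext psi_xtd /=.
have := descent_lemma x d f_grad g_lip (proj1 t01); lra.
Qed.

Lemma armijo_small_step n (f : vec n -> R) (g : vec n -> vec n) (L : R)
    (psi : vec n -> option R) (x d : vec n) px pd (sigma r gamma alpha : R) :
  is_gradient f g -> 0 < L -> lipschitz_map g L -> ext_convex psi ->
  psi x = Some px -> psi (vadd x d) = Some pd ->
  0 < sigma -> 0 <= r -> 0 < gamma < 1 ->
  (dot (g x) d + pd - px) * (1 + r) <= - (sigma * dot d d) ->
  0 < alpha <= 1 -> alpha <= 2 * (1 - gamma) * sigma / (L * (1 + r)) ->
  ext_le (Fext f psi (vadd x (vscale alpha d)))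
    (Some (f x + px + alpha * gamma * (dot (g x) d + pd - px))).
Proof.
move=> f_grad L_gt0 g_lip psi_cvx psi_x psi_xd sigma_gt0 r_ge0 gamma01 Delta_le alpha01 alpha_le.
apply: ext_le_weaken (Fext_descent f_grad g_lip psi_cvx psi_x psi_xd _) _; first lra.
set Delta := dot (g x) d + pd - px in Delta_le *; set dd := dot d d in Delta_le *.
have dd_ge0 : 0 <= dd := dotvv_ge0 d.
have alpha_Lr : alpha * (L * (1 + r)) <= 2 * (1 - gamma) * sigma.
  by apply: Rle_div_mul alpha_le; nra.
suff : (alpha * (1 - gamma) * Delta + L / 2 * (alpha * alpha) * dd) * (1 + r) <= 0 by nra.
have -> : (alpha * (1 - gamma) * Delta + L / 2 * (alpha * alpha) * dd) * (1 + r)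
        = alpha * (1 - gamma) * (Delta * (1 + r)) + alpha * dd / 2 * (alpha * (L * (1 + r)))
  by field.
have := Rmult_le_compat_l (alpha * (1 - gamma)) _ _ ltac:(nra) Delta_le.
have := Rmult_le_compat_l (alpha * dd / 2) _ _ ltac:(nra) alpha_Lr.
nra.
Qed.

(* The first success [i] is either [0] or has [beta^(i-1) > c]. *)
Lemma backtracking_terminates (P : nat -> Prop) (beta c : R) :
  0 < beta < 1 -> 0 < c -> (forall i, beta ^ i <= c -> P i) ->
  exists i, P i /\ (forall j, (j < i)%nat -> ~ P j) /\ Rmin 1 (beta * c) <= beta ^ i.
Proof.
move=> beta01 c_gt0 small_P.
have [N N_small] := pow_lt_1_zero beta ltac:(rewrite Rabs_right; lra) c c_gt0.
have PN : P N.
  apply: small_P; have := N_small N (le_n N).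
  by rewrite Rabs_right; [lra | apply/Rle_ge/pow_le; lra].
have [i [[Pi i_least] _]] := dec_inh_nat_subset_has_unique_least_element P
  (fun j => classic (P j)) (ex_intro _ N PN).
exists i; split; first exact: Pi.
split=> [j /ltP ji Pj | ]; first by have := i_least j Pj; lia.
case: i Pi i_least => [|k] _ k_least; first exact: Rmin_l.
apply: Rle_trans (Rmin_r 1 (beta * c)) _; apply: Rmult_le_compat_l; first lra.
apply: Rnot_lt_le => small_k.
by have := k_least k (small_P k (Rlt_le _ _ small_k)); lia.
Qed.

Theorem corollary1 (n : nat) (f : vec n -> R) (gradf : vec n -> vec n) (L : R)
    (psi : vec n -> option R) (x : vec n) (px : R) (H : mat n) (sigma eta : R)
    (d : vec n) :
  assumption1 f gradf L psi ->
  psi x = Some px ->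
  sym_mat H ->
  lambda_min_is H sigma -> 0 < sigma ->
  0 <= eta < 1 ->
  eta_inexact (Qmodel gradf psi x px H) eta d ->
  exists pd, psi (vadd x d) = Some pd /\
    let Delta := dot (gradf x) d + pd - px in
    Delta <= - (1 / (1 + sqrt eta)) * dot d (mulmv H d) /\
    - (1 / (1 + sqrt eta)) * dot d (mulmv H d)
      <= - (sigma / (1 + sqrt eta)) * (vnorm d) ^ 2 /\
    (forall beta gamma, 0 < beta < 1 -> 0 < gamma < 1 ->
      exists i : nat,
        ext_le (Fext f psi (vadd x (vscale (beta ^ i) d)))
               (Some (f x + px + beta ^ i * gamma * Delta)) /\
        (forall j : nat, (j < i)%nat ->
          ~ ext_le (Fext f psi (vadd x (vscale (beta ^ j) d)))
                   (Some (f x + px + beta ^ j * gamma * Delta))) /\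
        Rmin 1 (2 * beta * (1 - gamma) * sigma / (L * (1 + sqrt eta))) <= beta ^ i).
Proof.
move=> [f_grad [L_gt0 [g_lip [psi_cvx _]]]] psi_x H_sym H_min sigma_gt0 eta01
  [Qstar [qd [[Qstar_lb _] [Qd inexact]]]].
move: Qd; rewrite /Qmodel; case psi_xd: (psi (vadd x d)) => [pd|] //= [Qd].
exists pd; split=> //; cbv zeta.
set Delta := dot (gradf x) d + pd - px; set a := dot d (mulmv H d).
set r := sqrt eta; have r_ge0 : 0 <= r := sqrt_pos eta.
have a_sigma : sigma * dot d d <= a := lambda_min_le_quad d H_sym H_min.
have a_ge0 : 0 <= a by have := dotvv_ge0 d; nra.
have Qstar_le t : 0 <= t <= 1 -> Qstar <= t * Delta + t * t * a / 2.
  move=> t01; have [q [Qtd q_le]] := Qmodel_segment gradf H psi_cvx psi_x psi_xd t01.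
  by have := Qstar_lb q (ex_intro _ _ Qtd); rewrite /Delta /a; lra.
have Qd_le : Delta + a / 2 <= (1 - eta) * Qstar by rewrite -Qd in inexact; rewrite /Delta /a; nra.
have Delta_le : Delta * (1 + r) <= - a := inexact_step_bound eta01 a_ge0 Qstar_le Qd_le.
have Delta_sigma : Delta * (1 + r) <= - (sigma * dot d d) by lra.
split; [|split].
- apply: (Rmult_le_reg_r (1 + r)); first lra.
  by have -> : - (1 / (1 + r)) * a * (1 + r) = - a by field; lra.
- rewrite /= Rmult_1_r; apply: (Rmult_le_reg_r (1 + r)); first lra.
  have -> : - (1 / (1 + r)) * a * (1 + r) = - a by field; lra.
  have -> : - (sigma / (1 + r)) * (vnorm d * vnorm d) * (1 + r) = - (sigma * dot d d)
    by rewrite vnorm_sqr; field; lra.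
  lra.
move=> beta gamma beta01 gamma01.
set c := 2 * (1 - gamma) * sigma / (L * (1 + r)).
have c_gt0 : 0 < c by apply: Rdiv_lt_0_compat; nra.
have -> : 2 * beta * (1 - gamma) * sigma / (L * (1 + r)) = beta * c by rewrite /c; field; nra.
apply: backtracking_terminates => // i small_i.
have beta_i : 0 < beta ^ i <= 1.
  by split; [apply: pow_lt | rewrite -(pow1 i); apply: pow_incr]; lra.
exact: armijo_small_step f_grad L_gt0 g_lip psi_cvx psi_x psi_xd sigma_gt0 r_ge0 gamma01
  Delta_sigma beta_i small_i.
Qed.
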